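(* There exists a family of species trees whose number of matching coalescent histories grows faster than exponentially in the number of taxa (leaves) $m$. In particular, for odd $m\ge 1$, the number $h_{(m-1)/2}$ of matching coalescent histories of the lodgepole species tree $\lambda_{(m-1)/2}$ (which has $m$ leaves) satisfies, as $m\to\infty$ through odd values, $$h_{(m-1)/2}\sim m!!\sim\sqrt{2}\left(\sqrt{\frac{m+1}{e}}\right)^{m+1}.$$
   Context: A species tree is a rooted binary tree whose leaves carry distinct labels. Each node $v$ of a tree $t$ has a branch directly above it: for a non-root node this is the edge joining $v$ to its parent, and the root additionally has a root branch above it. A leaf $x$ descends from a branch if $x$ lies in the subtree below that branch. A branch $b'$ is descended from a branch $b$ if the node at the lower end of $b'$ lies in the subtree below $b$. Given a species tree $t$, a matching coalescent history of $t$ is a map $h$ from the set of internal nodes of $t$ to the set of branches of $t$ such that: (a) for every leaf $x$ and internal node $k$, if $x$ descends from $k$ then $x$ descends from the branch $h(k)$; (b) for all internal nodes $k_1,k_2$, if $k_2$ is a descendant of $k_1$ then $h(k_2)$ is descended from or coincides with $h(k_1)$. The lodgepole family $(\lambda_n)_{n\ge0}$: $\lambda_0$ is the one-leaf tree, and $\lambda_{n+1}$ is obtained by attaching $\lambda_n$ and a cherry (a two-leaf tree) as the two child subtrees of a new root; $\lambda_n$ has $2n+1$ leaves. The one-leaf tree $\lambda_0$ is assigned $h_0=1$ history by convention. $m!!=m(m-2)\cdots 3\cdot1$ for odd $m$, and $\sim$ denotes asymptotic equivalence (ratio tends to $1$). *)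

From mathcomp Require Import all_boot.
Set Implicit Arguments. Unset Strict Implicit. Unset Printing Implicit Defensive.

(* Rooted binary tree shapes.  Leaf labels are distinct and play no role in
   the number of matching coalescent histories, so they are left implicit:
   a leaf is identified by its position. *)
Inductive tree := Leaf | Node of tree & tree.

(* Nodes are addressed by their path from the root (false = left child,
   true = right child).  The branch above node v is identified with v
   (the root branch is the branch above the root [::]). *)
Fixpoint nodes (t : tree) : seq (seq bool) :=
  match t with
  | Leaf => [:: [::]]
  | Node l r => [::] :: (map (cons false) (nodes l) ++ map (cons true) (nodes r))
  end.

Fixpoint leaves (t : tree) : seq (seq bool) :=
  match t with
  | Leaf => [:: [::]]
  | Node l r => map (cons false) (leaves l) ++ map (cons true) (leaves r)
  end.

Fixpoint internals (t : tree) : seq (seq bool) :=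
  match t with
  | Leaf => [::]
  | Node l r => [::] :: (map (cons false) (internals l) ++ map (cons true) (internals r))
  end.

Definition below (p q : seq bool) : bool := prefix p q.

Definition is_history (t : tree) (h : seq bool -> seq bool) : bool :=
  all (fun k => h k \in nodes t) (internals t) &&
  all (fun k => all (fun x => below k x ==> below (h k) x) (leaves t)) (internals t) &&
  all (fun k1 => all (fun k2 => below k1 k2 ==> below (h k1) (h k2)) (internals t))
      (internals t).

(* The number of matching coalescent histories: maps from the (uniq) list of
   internal nodes to the (uniq) list of nodes/branches, encoded by indices. *)
Definition num_histories (t : tree) : nat :=
  #|[set f : {ffun 'I_(size (internals t)) -> 'I_(size (nodes t))} |
     is_history t (fun k => if insub (index k (internals t)) is Some i
                      then nth [::] (nodes t) (f i) else [::])]|.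

Fixpoint lodgepole (n : nat) : tree :=
  match n with
  | 0 => Leaf
  | n'.+1 => Node (lodgepole n') (Node Leaf Leaf)
  end.

Fixpoint dfact (m : nat) : nat :=
  match m with
  | 0 => 1
  | 1 => 1
  | (m'.+1 as k).+1 => m'.+2 * dfact m'
  end.

From mathcomp Require Import all_boot zify.
Set Implicit Arguments. Unset Strict Implicit. Unset Printing Implicit Defensive.

(* Every branch of a lodgepole tree lies on the spine of left children or
   just below it.  Read from the root down, a matching history sends the root
   of the subtree lambda_{n-k} hanging at depth d to a spine branch between the
   image of its parent and depth d; if that image lies i levels above depth d,
   the root of the attached cherry has i + 2 possible images (the spine
   branches from there down to depth d, and the cherry's own branch).  Hence
   h_n = H_n(0) with H_n(j) = sum_{1 <= x <= j+1} (x+1) H_{n-1}(x).  Adding the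
   term x = 0 gives G_n(j) = C(2n+j+1, j+1) (2n-1)!!, so G_n(0) = (2n+1)!!,
   and G_n(0) - H_n(0) is a convolution of the H_k(0) <= (2k+1)!! with double
   factorials, at most 5 (2n-1)!!.  Thus h_n ~ (2n+1)!!, which outgrows every
   exponential since it dominates n!.  Finally (2n+1)!! = (2N)! / (2^N N!)
   with N = n+1; the Stirling remainder ln N! + N - (N + 1/2) ln N has
   increments O(1/N^2), so its values at 2N and N become close and the
   constant sqrt (2 pi) cancels. *)

(** * Words and finite sums *)

Section Words.
Variable T : eqType.

Fixpoint words (n : nat) (L : seq T) : seq (seq T) :=
  if n is n'.+1 then [seq x :: s | x <- L, s <- words n' L] else [:: [::]].

Lemma mem_words n L s : (s \in words n L) = (size s == n) && all (mem L) s.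
Proof.
elim: n s => [|n IH] [|x s] //=.
- by apply/negbTE/allpairsP => -[[y t] [_ _ /=]].
- apply/allpairsP/idP => [[[y t] [/= Hy Ht [-> ->]]]|/andP[Hs /andP[Hx Ha]]].
    by move: Ht; rewrite IH eqSS => /andP[-> ->]; rewrite Hy.
  by exists (x, s); split => //=; rewrite IH -eqSS Hs.
Qed.

Lemma words_uniq n L : uniq L -> uniq (words n L).
Proof.
move=> uL; elim: n => [|n IH] //=.
by apply: allpairs_uniq => // -[x s] [y t] _ _ /= [-> ->].
Qed.

Lemma count_wordsS P n L :
  count P (words n.+1 L) = \sum_(x <- L) count (fun s => P (x :: s)) (words n L).
Proof.
rewrite /= /allpairs count_flatten; move: (words n L) => S.
elim: L => [|x L IH]; first by rewrite big_nil.
by rewrite big_cons /= count_map IH.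
Qed.

Lemma count_words_cat P m n L :
  count P (words (m + n) L) =
  \sum_(u <- words m L) count (fun v => P (u ++ v)) (words n L).
Proof.
elim: m P => [|m IH] P; first by rewrite /= big_cons big_nil addn0.
rewrite addSn count_wordsS /= /allpairs big_flatten /= big_map.
by apply: eq_bigr => x _; rewrite IH big_map.
Qed.

Lemma count_words_border P n L :
  count P (words n.+2 L) =
  \sum_(x <- L) \sum_(u <- words n L) \sum_(z <- L) P (x :: u ++ [:: z]).
Proof.
rewrite count_wordsS; apply: eq_bigr => x _.
rewrite -[n.+1]addn1 count_words_cat; apply: eq_bigr => u _.
by rewrite count_wordsS; apply: eq_bigr => z _ /=; rewrite addn0.
Qed.

(* A finite function ['I_a -> 'I_b] is read as the word of the entries of [L]
   it indexes; for [L] duplicate-free this is a bijection onto [words a L]. *)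
Lemma card_ffun_words (a b : nat) (L : seq T) (d0 : T) (P : pred (seq T)) :
  uniq L -> size L = b ->
  #|[set f : {ffun 'I_a -> 'I_b} | P [seq nth d0 L (f i) | i <- enum 'I_a]]|
  = count P (words a L).
Proof.
move=> uL sL.
pose w (f : {ffun 'I_a -> 'I_b}) := [seq nth d0 L (f i) | i <- enum 'I_a].
have nth_w f (i : 'I_a) : nth d0 (w f) i = nth d0 L (f i).
  by rewrite /w (nth_map i) ?size_enum_ord // nth_ord_enum.
rewrite -sum1dep_card sum1_count -(count_map w P).
apply/permP/uniq_perm.
- rewrite map_inj_uniq ?index_enum_uniq // => f g /= E; apply/ffunP => i.
  have := congr1 (fun s => nth d0 s (nat_of_ord i)) E.
  rewrite !nth_w; move/eqP; rewrite nth_uniq ?sL ?ltn_ord // => /eqP H; exact: val_inj.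
- exact: words_uniq.
- move=> s; rewrite mem_words; apply/mapP/andP => [[f _ ->]|[/eqP Hs /allP HL]].
    rewrite /w size_map size_enum_ord; split => //; apply/allP => x /mapP[i _ ->].
    by apply: mem_nth; rewrite sL ltn_ord.
  have Hi (i : 'I_a) : index (nth d0 s i) L < b.
    by rewrite -sL index_mem; apply: HL; apply: mem_nth; rewrite Hs.
  exists [ffun i => Ordinal (Hi i)]; first by rewrite mem_index_enum.
  apply: (@eq_from_nth _ d0); first by rewrite size_map size_enum_ord.
  move=> j; rewrite Hs => Hj.
  rewrite /w (nth_map (Ordinal Hj)) ?size_enum_ord //.
  have -> : nth (Ordinal Hj) (enum 'I_a) j = Ordinal Hj.
    by apply: val_inj; rewrite /= nth_enum_ord.
  by rewrite ffunE /= nth_index //; apply: HL; apply: mem_nth; rewrite Hs.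
Qed.

End Words.

Lemma count_mem_subset (T : eqType) (S L : seq T) :
  uniq S -> uniq L -> {subset S <= L} -> count (mem S) L = size S.
Proof.
move=> uS uL sub; rewrite -size_filter; apply/perm_size/uniq_perm => //.
  exact: filter_uniq.
move=> y; rewrite mem_filter; apply/andP/idP => [[]//|Hy]; split => //; exact: sub.
Qed.

Lemma has_eq_sum (r : seq nat) (p : pred nat) : uniq r ->
  {in r &, forall i j, p i -> p j -> i = j} -> (has p r : nat) = \sum_(i <- r) p i.
Proof.
elim: r => [|a r IH] /=; first by rewrite big_nil.
move=> /andP[Ha Hu] E; rewrite big_cons.
have E' : {in r &, forall i j, p i -> p j -> i = j}.
  by move=> i j Hi Hj; apply: E; rewrite inE ?Hi ?Hj orbT.
case Hp: (p a) => /=; last by rewrite IH.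
suff Hn : has p r = false by rewrite -IH // Hn.
apply/negbTE/hasP => -[j Hj Hpj].
have Eaj := E a j (mem_head _ _) (mem_behead (s := a :: r) Hj) Hp Hpj.
by move: Ha; rewrite Eaj Hj.
Qed.

Lemma sum_count (T : Type) (s : seq T) (p : pred T) :
  \sum_(x <- s) (p x : nat) = count p s.
Proof. by rewrite -sumn_count sumnE big_map. Qed.

Lemma big_distr3 (T1 T2 : Type) (X Z : seq T1) (U : seq T2) (R : seq nat)
  (A B : nat -> T1 -> nat) (C : nat -> T2 -> nat) :
  \sum_(x <- X) \sum_(u <- U) \sum_(z <- Z) \sum_(i <- R) (A i x * (B i z * C i u)) =
  \sum_(i <- R) ((\sum_(x <- X) A i x) * ((\sum_(z <- Z) B i z) * (\sum_(u <- U) C i u))).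
Proof.
under eq_bigr do under eq_bigr do rewrite exchange_big.
under eq_bigr do rewrite exchange_big.
rewrite exchange_big; apply: eq_bigr => i _.
rewrite big_distrl; apply: eq_bigr => x _ /=.
transitivity (A i x * \sum_(u <- U) \sum_(z <- Z) (B i z * C i u)).
  by rewrite big_distrr /=; apply: eq_bigr => u _; rewrite big_distrr.
congr (_ * _); rewrite [RHS]big_distrr /=; apply: eq_bigr => u _.
by rewrite big_distrl.
Qed.

Lemma hockey_stick a M : \sum_(x < M.+1) 'C(a + x, x) = 'C(a + M.+1, M).
Proof.
elim: M => [|M IH]; first by rewrite big_ord1 !bin0.
by rewrite big_ord_recr /= IH [in RHS]addnS binS addnC.
Qed.

(** * Histories of lodgepole trees *)

(* The history encoded by a word [s] over the nodes sends the [i]-th entry of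
   [I] to the [i]-th letter of [s]; the value [[::]] off [I] is never used. *)
Definition lookup (I s : seq (seq bool)) (k : seq bool) : seq bool :=
  if index k I < size I then nth [::] s (index k I) else [::].

Lemma eq_is_history t h1 h2 : h1 =1 h2 -> is_history t h1 = is_history t h2.
Proof.
move=> E; rewrite /is_history.
by congr (_ && _ && _); apply: eq_all => k; rewrite E //; apply: eq_all => k2; rewrite E.
Qed.

Lemma nodes_uniq t : uniq (nodes t).
Proof.
elim: t => [|l IHl r IHr] //=.
rewrite cat_uniq !map_inj_uniq // ?IHl ?IHr; try by move=> ? ? [].
rewrite mem_cat andbT /=; apply/andP; split.
  by rewrite negb_or; apply/andP; split; apply/negP => /mapP[].
by apply/hasP => -[x /mapP[y _ ->] /mapP[z _]].
Qed.

Lemma num_histories_words t :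
  num_histories t = count (fun s => is_history t (lookup (internals t) s))
                          (words (size (internals t)) (nodes t)).
Proof.
rewrite /num_histories -(@card_ffun_words _ _ _ _ [::] _ (nodes_uniq t) (erefl _)).
apply: eq_card => f; rewrite !inE; apply: eq_is_history => k.
rewrite /lookup; case: insubP => [i Hi Hv|Hn]; last by rewrite (negbTE Hn).
rewrite Hi (nth_map i) ?size_enum_ord -?Hv ?ltn_ord //.
by congr (nth _ _ (f _)); apply: val_inj; rewrite /= nth_enum_ord -?Hv ?ltn_ord.
Qed.

Definition spine m := nseq m false.

Lemma size_spine m : size (spine m) = m. Proof. exact: size_nseq. Qed.

Lemma prefix_spine a b : prefix (spine a) (spine b) = (a <= b).
Proof. by elim: a b => [|a IH] [|b] //=; rewrite IH. Qed.

Lemma prefix_spine_cat m d x : m <= d -> prefix (spine m) (spine d ++ x).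
Proof.
rewrite /spine; elim: m d => [|m IH] [|d] //= H; [exact: prefix0s | exact: IH].
Qed.

Lemma spine_catS d x : spine d ++ false :: x = spine d.+1 ++ x.
Proof. by elim: d => //= d ->. Qed.

Lemma prefix_spine_rcons m d : m <= d -> prefix (spine m) (rcons (spine d) true).
Proof. by move=> H; rewrite -cats1 prefix_spine_cat. Qed.

Lemma prefix_rcons_spine d b : prefix (rcons (spine d) true) (spine d ++ [:: true; b]).
Proof. by rewrite -cats1 -[[:: true; b]]/([:: true] ++ [:: b]) catA prefix_prefix. Qed.

Lemma prefix_spine_fork u d a b :
  prefix u (spine d ++ true :: a) -> prefix u (spine d ++ false :: b) ->
  exists2 m, m <= d & u = spine m.
Proof.
rewrite /spine; elim: d u => [|d IH] [|c u] /=; try by exists 0.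
- by case: c.
- case: c => //= H1 H2.
  by have [m Hm ->] := IH _ H1 H2; exists m.+1.
Qed.

Lemma prefix_spine_cherry u d :
  prefix u (spine d ++ [:: true; false]) -> prefix u (spine d ++ [:: true; true]) ->
  u = rcons (spine d) true \/ exists2 m, m <= d & u = spine m.
Proof.
rewrite /spine; elim: d u => [|d IH] [|c u] /=; try by right; exists 0.
- case: c => //; case: u => [|c u] /=; first by left.
  by case: c => //; case: u.
- case: c => //= H1 H2.
  have [->|[m Hm ->]] := IH _ H1 H2; first by left.
  by right; exists m.+1.
Qed.

Lemma internals_lodgepoleS n : internals (lodgepole n.+1) =
  [::] :: [seq false :: k | k <- internals (lodgepole n)] ++ [:: [:: true]].
Proof. by []. Qed.

Lemma leaves_lodgepoleS n : leaves (lodgepole n.+1) =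
  [seq false :: k | k <- leaves (lodgepole n)] ++ [:: [:: true; false]; [:: true; true]].
Proof. by []. Qed.

Lemma size_internals_lodgepole n : size (internals (lodgepole n)) = n.*2.
Proof.
elim: n => // n IH.
by rewrite internals_lodgepoleS /= size_cat size_map IH /= addn1 doubleS.
Qed.

Lemma internals_lodgepoleP n k : k \in internals (lodgepole n.+1) ->
  [\/ k = [::], k = [:: true] |
      exists2 k', k' \in internals (lodgepole n) & k = false :: k'].
Proof.
rewrite internals_lodgepoleS inE mem_cat.
case/orP=> [/eqP->|/orP[/mapP[k' Hk ->]|]]; first by constructor 1.
  by constructor 3; exists k'.
by rewrite inE => /eqP->; constructor 2.
Qed.

Lemma leaves_lodgepoleP n x : x \in leaves (lodgepole n.+1) ->
  [\/ x = [:: true; false], x = [:: true; true] |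
      exists2 x', x' \in leaves (lodgepole n) & x = false :: x'].
Proof.
rewrite leaves_lodgepoleS mem_cat => /orP[/mapP[x' Hx ->]|].
  by constructor 3; exists x'.
by rewrite !inE => /orP[]/eqP->; [constructor 1 | constructor 2].
Qed.

Lemma root_internals_lodgepole n : [::] \in internals (lodgepole n.+1).
Proof. by rewrite internals_lodgepoleS inE eqxx. Qed.

Lemma cherry_internals_lodgepole n : [:: true] \in internals (lodgepole n.+1).
Proof. by rewrite internals_lodgepoleS inE mem_cat !inE eqxx !orbT. Qed.

Lemma internals_lodgepole_left n k :
  k \in internals (lodgepole n) -> false :: k \in internals (lodgepole n.+1).
Proof. by move=> H; rewrite internals_lodgepoleS inE mem_cat map_f. Qed.

Lemma leaves_lodgepole_left n x :
  x \in leaves (lodgepole n) -> false :: x \in leaves (lodgepole n.+1).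
Proof. by move=> H; rewrite leaves_lodgepoleS mem_cat map_f. Qed.

Lemma spine_leaves_lodgepole n : spine n \in leaves (lodgepole n).
Proof. by elim: n => // n IH; apply: leaves_lodgepole_left. Qed.

Lemma spine_nodes_lodgepole m N : m <= N -> spine m \in nodes (lodgepole N).
Proof.
elim: N m => [|N IH] [|m] //= H; rewrite ?inE //.
by rewrite mem_cat map_f ?orbT // IH.
Qed.

Lemma cherry_nodes_lodgepole d N : d < N -> rcons (spine d) true \in nodes (lodgepole N).
Proof.
elim: N d => [|N IH] [|d] //= H.
- by rewrite inE mem_cat !inE eqxx !orbT.
- by rewrite inE mem_cat map_f ?orbT // IH.
Qed.

(* The admissible images of a cherry root when the root of its parent maps to
   the spine node at depth [d - i] and the cherry hangs at depth [d]. *)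
Definition cherry_image d i (z : seq bool) :=
  (z == rcons (spine d) true) || has (fun i' => z == spine (d - i')) (iota 0 i.+1).

(* [spine_history n d lo h]: [h] restricted to the copy of [lodgepole n]
   rooted at [spine d] of a larger lodgepole tree is a matching history whose
   images all lie below [spine lo]. *)
Fixpoint spine_history (n d lo : nat) (h : seq bool -> seq bool) : bool :=
  if n is n'.+1 then
    has (fun i => [&& h [::] == spine (d - i), cherry_image d i (h [:: true])
                    & spine_history n' d.+1 (d - i) (fun k => h (false :: k))])
        (iota 0 (d.+1 - lo))
  else true.

Lemma spine_historyS n d lo h : spine_history n.+1 d lo h =
    has (fun i => [&& h [::] == spine (d - i), cherry_image d i (h [:: true])
                    & spine_history n d.+1 (d - i) (fun k => h (false :: k))])
        (iota 0 (d.+1 - lo)).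
Proof. by []. Qed.

Definition spine_history_spec n d lo (h : seq bool -> seq bool) :=
  [/\ {in internals (lodgepole n), forall k, h k \in nodes (lodgepole (n + d))},
      {in internals (lodgepole n), forall k, {in leaves (lodgepole n), forall x,
          prefix k x -> prefix (h k) (spine d ++ x)}},
      {in internals (lodgepole n) &, forall k1 k2, prefix k1 k2 -> prefix (h k1) (h k2)} &
      {in internals (lodgepole n), forall k, prefix (spine lo) (h k)}].

Lemma spine_history_sound n d lo h :
  lo <= d -> spine_history n d lo h -> spine_history_spec n d lo h.
Proof.
elim: n d lo h => [|n IH] d lo h Hlo; first by split.
rewrite spine_historyS => /hasP [i]; rewrite mem_iota add0n => /andP[_ Hi].
case/and3P => /eqP Hr Hc Hrec.
set m := d - i in Hr Hrec.
have Hmd : m <= d by rewrite /m leq_subr.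
have Hlom : lo <= m by rewrite /m; lia.
have [C0 C1 C2 C3] := IH _ _ _ (leq_trans Hmd (leqnSn d)) Hrec.
have Hz : h [:: true] = rcons (spine d) true \/
          exists2 m', m <= m' <= d & h [:: true] = spine m'.
  case/orP: Hc => [/eqP ->|/hasP[i' Hi' /eqP ->]]; first by left.
  by right; exists (d - i') => //; move: Hi'; rewrite mem_iota /m; lia.
have E : n + d.+1 = n.+1 + d by rewrite addnS addSn.
split.
- move=> k /internals_lodgepoleP [->|->|[k' Hk' ->]].
  + by rewrite Hr spine_nodes_lodgepole //; lia.
  + case: Hz => [->|[m' /andP[_ Hm'] ->]].
      by rewrite cherry_nodes_lodgepole //; lia.
    by rewrite spine_nodes_lodgepole //; lia.
  + by rewrite -E; apply: C0.
- move=> k /internals_lodgepoleP [->|->|[k' Hk' ->]] x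
    /leaves_lodgepoleP [->|->|[x' Hx' ->]] Hp //; try by rewrite Hr prefix_spine_cat.
  + case: Hz => [->|[m' /andP[_ Hm'] ->]];
      [exact: prefix_rcons_spine | exact: prefix_spine_cat].
  + case: Hz => [->|[m' /andP[_ Hm'] ->]];
      [exact: prefix_rcons_spine | exact: prefix_spine_cat].
  + by rewrite spine_catS; apply: C1.
- move=> k1 k2 /internals_lodgepoleP [->|->|[k1' H1 ->]]
    /internals_lodgepoleP [->|->|[k2' H2 ->]] Hp //; try exact: prefix_refl.
  + rewrite Hr; case: Hz => [->|[m' /andP[Hm' _] ->]]; first exact: prefix_spine_rcons.
    by rewrite prefix_spine.
  + by rewrite Hr; apply: C3.
  + by apply: C2.
- move=> k /internals_lodgepoleP [->|->|[k' Hk' ->]].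
  + by rewrite Hr prefix_spine.
  + case: Hz => [->|[m' /andP[Hm' _] ->]]; first exact: prefix_spine_rcons.
    by rewrite prefix_spine; lia.
  + by apply: prefix_trans (C3 _ Hk'); rewrite prefix_spine.
Qed.

Lemma spine_history_complete n d lo h :
  spine_history_spec n d lo h -> spine_history n d lo h.
Proof.
elim: n d lo h => [|n IH] d lo h // [C0 C1 C2 C3]; rewrite spine_historyS.
have Hl1 : false :: spine n \in leaves (lodgepole n.+1).
  exact/leaves_lodgepole_left/spine_leaves_lodgepole.
have Hl2 : [:: true; false] \in leaves (lodgepole n.+1).
  by rewrite leaves_lodgepoleS mem_cat !inE eqxx orbT.
have Hl3 : [:: true; true] \in leaves (lodgepole n.+1).
  by rewrite leaves_lodgepoleS mem_cat !inE eqxx !orbT.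
have Hr0 := root_internals_lodgepole n; have Hc0 := cherry_internals_lodgepole n.
have [m Hmd Hr] :=
  prefix_spine_fork (C1 _ Hr0 _ Hl2 (prefix0s _)) (C1 _ Hr0 _ Hl1 (prefix0s _)).
have Hlom : lo <= m by rewrite -prefix_spine -Hr; apply: C3.
apply/hasP; exists (d - m); first by rewrite mem_iota; lia.
rewrite subKn // Hr eqxx andTb; apply/andP; split.
- have [->|[m' Hm' Hc]] := prefix_spine_cherry (C1 _ Hc0 _ Hl2 isT) (C1 _ Hc0 _ Hl3 isT).
    by rewrite /cherry_image eqxx.
  have Hmm : m <= m' by rewrite -prefix_spine -Hr -Hc; apply: C2.
  apply/orP; right; apply/hasP; exists (d - m'); first by rewrite mem_iota; lia.
  by rewrite subKn // Hc.
- apply: IH; split.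
  + move=> k Hk; rewrite addnS -addSn; exact/C0/internals_lodgepole_left.
  + move=> k Hk x Hx Hp; rewrite -spine_catS.
    by apply: C1 (internals_lodgepole_left Hk) _ (leaves_lodgepole_left Hx) _.
  + move=> k1 k2 H1 H2 Hp.
    by apply: C2 (internals_lodgepole_left H1) (internals_lodgepole_left H2) _.
  + move=> k Hk; rewrite -Hr.
    by apply: C2 => //; apply: internals_lodgepole_left.
Qed.

Lemma is_history_lodgepole n h : is_history (lodgepole n) h = spine_history n 0 0 h.
Proof.
apply/idP/idP.
- case/andP=> /andP[/allP H0 /allP H1] /allP H2; apply: spine_history_complete; split.
  + by move=> k Hk; rewrite addn0; apply: H0.
  + by move=> k Hk x Hx Hp; have := allP (H1 k Hk) x Hx; rewrite /below Hp.
  + by move=> k1 k2 Hk1 Hk2 Hp; have := allP (H2 k1 Hk1) k2 Hk2; rewrite /below Hp.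
  + by move=> k _; apply: prefix0s.
- case/(spine_history_sound (leqnn 0)) => H0 H1 H2 _.
  rewrite /is_history; apply/andP; split; first apply/andP; first split.
  + by apply/allP => k Hk; rewrite -(addn0 n); apply: H0.
  + apply/allP => k Hk; apply/allP => x Hx; apply/implyP => Hp.
    exact: (H1 k Hk x Hx Hp).
  + apply/allP => k Hk; apply/allP => x Hx; apply/implyP => Hp.
    exact: (H2 k x Hk Hx Hp).
Qed.

Lemma eq_spine_history n d lo h1 h2 : {in internals (lodgepole n), h1 =1 h2} ->
  spine_history n d lo h1 = spine_history n d lo h2.
Proof.
elim: n d lo h1 h2 => // n IH d lo h1 h2 E; rewrite !spine_historyS.
apply: eq_has => i; rewrite !E ?root_internals_lodgepole ?cherry_internals_lodgepole //.
by congr [&& _, _ & _]; apply: IH => k Hk; apply/E/internals_lodgepole_left.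
Qed.

Section LookupLodgepole.
Variables (n : nat) (x z : seq bool) (u : seq (seq bool)).
Hypothesis size_u : size u = size (internals (lodgepole n)).
Let I := internals (lodgepole n).
Let s := x :: u ++ [:: z].

Lemma lookup_root : lookup (internals (lodgepole n.+1)) s [::] = x.
Proof. by rewrite /lookup internals_lodgepoleS. Qed.

Lemma lookup_cherry : lookup (internals (lodgepole n.+1)) s [:: true] = z.
Proof.
rewrite /lookup internals_lodgepoleS /= index_cat.
have -> : ([:: true] \in [seq false :: k | k <- I]) = false.
  by apply/negbTE/negP; case/mapP.
rewrite /= addn0 size_cat /= size_map ltnS addn1 ltnSn.
by rewrite nth_cat -size_u ltnn subnn.
Qed.

Lemma lookup_left k :
  k \in I -> lookup (internals (lodgepole n.+1)) s (false :: k) = lookup I u k.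
Proof.
move=> Hk; have inj_false : injective (cons false) by move=> ? ? [].
rewrite /lookup internals_lodgepoleS /= index_cat (mem_map inj_false) Hk.
rewrite index_map // (index_mem k I) Hk ltnS size_cat size_map ltn_addr ?index_mem //.
by rewrite nth_cat size_u index_mem Hk.
Qed.

End LookupLodgepole.

Lemma count_cherry_image N d i : i <= d -> d < N ->
  count (cherry_image d i) (nodes (lodgepole N)) = i + 2.
Proof.
move=> Hid HdN.
pose S := rcons (spine d) true :: [seq spine (d - i') | i' <- iota 0 i.+1].
have -> : count (cherry_image d i) (nodes (lodgepole N)) =
          count (mem S) (nodes (lodgepole N)).
  apply: eq_count => z /=; rewrite /cherry_image in_cons; congr (_ || _).
  by apply/hasP/mapP => -[i' Hi' E]; exists i' => //; apply/eqP.
rewrite count_mem_subset ?nodes_uniq //.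
- by rewrite /S /= size_map size_iota addn2.
- rewrite /S cons_uniq; apply/andP; split.
  + apply/negP => /mapP [i' _ E].
    have : true \in rcons (spine d) true by rewrite mem_rcons mem_head.
    by rewrite E /spine mem_nseq andbF.
  + rewrite map_inj_in_uniq ?iota_uniq // => a b; rewrite !mem_iota => Ha Hb E.
    by have := congr1 size E; rewrite !size_spine; lia.
- move=> y; rewrite /S inE => /orP[/eqP ->|/mapP [i' _ ->]].
  + exact: cherry_nodes_lodgepole.
  + by apply: spine_nodes_lodgepole; lia.
Qed.

Lemma spine_history_lookupS n d lo x u z :
  size u = size (internals (lodgepole n)) ->
  spine_history n.+1 d lo (lookup (internals (lodgepole n.+1)) (x :: u ++ [:: z])) =
  \sum_(i <- iota 0 (d.+1 - lo))
    ((x == spine (d - i)) *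
     (cherry_image d i z *
      spine_history n d.+1 (d - i) (lookup (internals (lodgepole n)) u))) :> nat.
Proof.
move=> Hu; rewrite spine_historyS lookup_root lookup_cherry //.
rewrite (@eq_has _ _ (fun i => [&& x == spine (d - i), cherry_image d i z &
           spine_history n d.+1 (d - i) (lookup (internals (lodgepole n)) u)])); last first.
  by move=> i; congr [&& _, _ & _]; apply: eq_spine_history => k; apply: lookup_left.
rewrite has_eq_sum ?iota_uniq //; first by apply: eq_bigr => i _; rewrite -!mulnb.
move=> a b; rewrite !mem_iota => Ha Hb /andP[/eqP Ea _] /andP[/eqP Eb _].
by have := congr1 size (etrans (esym Ea) Eb); rewrite !size_spine; lia.
Qed.

(* [hsum n j] counts the histories of [lodgepole n] whose root has [j + 1]
   admissible spine positions. *)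
Fixpoint hsum n j := if n is n'.+1 then \sum_(i < j.+1) (i + 2) * hsum n' i.+1 else 1.

Fixpoint gsum n j := if n is n'.+1 then \sum_(x < j.+2) (x + 1) * gsum n' x else 1.

Lemma count_spine_history N n d lo : lo <= d -> n + d <= N ->
  count (fun s => spine_history n d lo (lookup (internals (lodgepole n)) s))
        (words n.*2 (nodes (lodgepole N))) = hsum n (d - lo).
Proof.
set L := nodes (lodgepole N).
elim: n d lo => [|n IH] d lo Hlo HN //.
set I := internals (lodgepole n).
rewrite doubleS count_words_border.
transitivity (\sum_(x <- L) \sum_(u <- words n.*2 L) \sum_(z <- L)
   \sum_(i <- iota 0 (d.+1 - lo))
      ((x == spine (d - i)) * (cherry_image d i z * spine_history n d.+1 (d - i) (lookup I u)))).
  apply: eq_bigr => x _; apply: eq_big_seq => u; rewrite mem_words => /andP[/eqP Hu _].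
  apply: eq_bigr => z _; apply: spine_history_lookupS.
  by rewrite Hu size_internals_lodgepole.
rewrite big_distr3.
have -> : iota 0 (d.+1 - lo) = index_iota 0 (d - lo).+1 by rewrite /index_iota subn0 subSn.
rewrite big_mkord /=; apply: eq_bigr => i _.
have Hi : i <= d by have := ltn_ord i; lia.
rewrite !sum_count count_uniq_mem ?nodes_uniq // spine_nodes_lodgepole; last by lia.
rewrite count_cherry_image //; last by lia.
rewrite (IH d.+1 (d - i)) //; last by lia.
  by rewrite mul1n subSn ?leq_subr // subKn.
by lia.
Qed.

Theorem num_histories_lodgepole n : num_histories (lodgepole n) = hsum n 0.
Proof.
rewrite num_histories_words size_internals_lodgepole.
rewrite -(count_spine_history (N := n) (leqnn 0)) ?addn0 //.
by apply: eq_count => s; rewrite is_history_lodgepole.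
Qed.

(** * Double factorials *)

Lemma gsum_hsum n j : gsum n j = hsum n j + \sum_(k < n) hsum k j * gsum (n.-1 - k) 0.
Proof.
have bump0 i : bump 0 i = i.+1 by [].
elim: n j => [|n IH] j; first by rewrite big_ord0 addn0.
rewrite /= big_ord_recl /= mul1n.
under eq_bigr => x _ do rewrite IH mulnDr.
rewrite big_split /= [\sum_(k < n.+1) _]big_ord_recl /= subn0 mul1n.
have -> : \sum_(i < j.+1) (bump 0 i + 1) * hsum n (bump 0 i) =
          \sum_(i < j.+1) (i + 2) * hsum n i.+1.
  by apply: eq_bigr => i _; rewrite bump0 addn1 addn2.
have -> : \sum_(i < j.+1) (bump 0 i + 1) * \sum_(k < n) hsum k (bump 0 i) * gsum (n.-1 - k) 0
   = \sum_(k < n) hsum (bump 0 k) j * gsum (n - bump 0 k) 0.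
  under eq_bigr => i _ do rewrite big_distrr.
  rewrite exchange_big /=; apply: eq_bigr => k _.
  rewrite bump0 /= big_distrl /=; apply: eq_bigr => i _.
  have -> : n.-1 - k = n - k.+1 by lia.
  by rewrite bump0 add0n mulnA; congr (_ * _ * _); lia.
by rewrite addnCA.
Qed.

Lemma hsum_le_gsum n j : hsum n j <= gsum n j.
Proof. by rewrite gsum_hsum leq_addr. Qed.

Definition odfact n := dfact n.*2.+1.

Lemma odfactS n : odfact n.+1 = (n.*2).+3 * odfact n.
Proof. by rewrite /odfact doubleS. Qed.

Lemma odfact_gt0 n : 0 < odfact n.
Proof. by elim: n => // n IH; rewrite odfactS muln_gt0. Qed.

Lemma dfact_pred_double n : dfact (n.+1).*2.-1 = odfact n.
Proof. by rewrite doubleS. Qed.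

Lemma gsum_closed n j : gsum n j = 'C(n.*2 + j.+1, j.+1) * dfact (n.*2).-1.
Proof.
elim: n j => [|n IH] j; first by rewrite add0n binn.
have E : dfact (n.+1).*2.-1 = n.*2.+1 * dfact (n.*2).-1.
  by rewrite dfact_pred_double; case: n {IH} => // n; rewrite doubleS /= mul1n.
rewrite E /=.
under eq_bigr => x _ do rewrite IH mulnA addn1 mul_bin_left.
have -> : \sum_(i < j.+2) (n.*2 + i.+1 - i) * 'C(n.*2 + i.+1, i) * dfact (n.*2).-1 =
          \sum_(i < j.+2) 'C(n.*2.+1 + i, i) * ((n.*2).+1 * dfact (n.*2).-1).
  apply: eq_bigr => i _; have -> : n.*2 + i.+1 - i = n.*2.+1 by lia.
  have -> : n.*2 + i.+1 = n.*2.+1 + i by lia.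
  by rewrite [_ * 'C(_, _)]mulnC -mulnA.
rewrite -big_distrl hockey_stick.
by congr (_ * _); congr 'C(_, _); lia.
Qed.

Lemma gsum0 n : gsum n 0 = odfact n.
Proof. by rewrite gsum_closed bin1 addn1; case: n => // n; rewrite dfact_pred_double odfactS. Qed.

Lemma hsum0_le_odfact n : hsum n 0 <= odfact n.
Proof. by rewrite -gsum0 hsum_le_gsum. Qed.

Lemma odfact_mul_le a b : 0 < a -> 0 < b -> odfact a * odfact b <= 3 * odfact (a + b).-1.
Proof.
move=> Ha; elim: b => // b IH _.
case: b IH => [|b] IH; first by rewrite addn1 mulnC /odfact /= muln1.
have e1 : (a + b.+2).-1 = (a + b).+1 by lia.
have e2 : (a + b.+1).-1 = a + b by lia.
have IH' := IH isT; rewrite e2 in IH'.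
rewrite e1 !odfactS mulnCA (leq_trans (leq_mul (leqnn _) IH')) //.
rewrite mulnCA leq_mul2l /=; apply: leq_mul => //.
by rewrite doubleS !ltnS; lia.
Qed.

Lemma sum_odfact_conv_le M :
  \sum_(k < M.+2) odfact k * odfact (M.+1 - k) <= 5 * odfact M.+1.
Proof.
have bump0 i : bump 0 i = i.+1 by [].
rewrite big_ord_recl big_ord_recr /= subn0 subnn muln1 mul1n.
have Hmid : \sum_(i < M) odfact (bump 0 i) * odfact (M.+1 - bump 0 i) <= M * (3 * odfact M).
  rewrite -[M in M * _]card_ord -sum_nat_const; apply: leq_sum => i _.
  rewrite bump0 subSS.
  apply: leq_trans (odfact_mul_le _ _) _ => //; first by rewrite subn_gt0.
  by have -> : (i.+1 + (M - i)).-1 = M by have := ltn_ord i; lia.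
have HD : M * (3 * odfact M) <= 3 * odfact M.+1.
  by rewrite mulnCA leq_mul2l /= odfactS leq_mul2r; apply/orP; right; lia.
rewrite [bump 0 M]bump0.
by apply: leq_trans (leq_add (leqnn _) (leq_add (leq_trans Hmid HD) (leqnn _))) _; lia.
Qed.

Lemma odfact_le_hsum M : odfact M.+1 <= hsum M.+1 0 + 5 * odfact M.
Proof.
rewrite -[odfact M.+1]gsum0 gsum_hsum leq_add2l.
apply: (@leq_trans (\sum_(k < M.+1) odfact k * odfact (M - k))).
  by apply: leq_sum => k _; rewrite gsum0 leq_mul2r hsum0_le_odfact orbT.
case: M => [|M]; first by rewrite big_ord1.
exact: sum_odfact_conv_le.
Qed.

Lemma fact_le_odfact n : n`! <= odfact n.
Proof. by elim: n => // n IH; rewrite factS odfactS; apply: leq_mul => //; lia. Qed.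

Lemma odfact_fact n : odfact n * 2 ^ n.+1 * n.+1`! = (n.+1).*2`!.
Proof.
elim: n => // n IH.
have E1 : (n.+2)`! = n.+2 * (n.+1)`! by rewrite factS.
have E2 : ((n.+2).*2)`! = (n.*2).+4 * ((n.*2).+3 * ((n.+1).*2)`!).
  by rewrite [(n.+2).*2]doubleS !factS doubleS.
rewrite odfactS E1 E2 expnS -IH.
set A := (n.+1)`!; set P := 2 ^ n.+1; set Q := odfact n.
by rewrite !mulnA; congr (_ * _ * _); lia.
Qed.

(** * Asymptotics *)

From Stdlib Require Import Reals Lra.
From Coquelicot Require Import Coquelicot.
Open Scope R_scope.

Lemma INR_fact n : INR (Factorial.fact n) = INR n`!.
Proof. by congr INR; elim: n => // n IH; rewrite factS /= IH. Qed.

Lemma leq_INR a b : (a <= b)%nat -> INR a <= INR b.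
Proof. by move/leP; apply: le_INR. Qed.

Lemma INR_gt0 m : (0 < m)%nat -> 0 < INR m.
Proof. by move/ltP; apply: lt_0_INR. Qed.

Lemma dfact_odfact n : dfact (2 * n + 1)%nat = odfact n.
Proof. by rewrite /odfact -mul2n addn1. Qed.

Notation hR n := (INR (num_histories (lodgepole n))).
Notation dR n := (INR (dfact (2 * n + 1))).

Lemma dR_gt0 n : 0 < dR n.
Proof. by rewrite dfact_odfact; apply/INR_gt0/odfact_gt0. Qed.

Lemma dR_S n : dR n.+1 = (2 * INR n + 3) * dR n.
Proof.
rewrite !dfact_odfact odfactS -multE mult_INR; congr (_ * _).
rewrite -addn3 -mul2n -plusE -multE plus_INR mult_INR /=; lra.
Qed.

Lemma hR_le_dR n : hR n <= dR n.
Proof.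
by rewrite num_histories_lodgepole dfact_odfact; apply/leq_INR/hsum0_le_odfact.
Qed.

Lemma dR_S_le_hR n : dR n.+1 <= hR n.+1 + 5 * dR n.
Proof.
rewrite !dfact_odfact num_histories_lodgepole.
have := leq_INR (odfact_le_hsum n); rewrite -plusE -multE plus_INR mult_INR.
by rewrite [INR 5]/=; lra.
Qed.

Lemma is_lim_seq_invS : is_lim_seq (fun n => / (INR n + 1)) 0.
Proof.
have H : is_lim_seq (fun n => INR n + 1) p_infty.
  apply: (is_lim_seq_le_p_loc INR); last exact: is_lim_seq_INR.
  by exists 0%nat => n _; lra.
exact: is_lim_seq_inv H _.
Qed.

Lemma hR_dR_bounds n : 1 - 5 / (INR n + 1) <= hR n / dR n <= 1.
Proof.
have HD := dR_gt0 n; have Hh := hR_le_dR n; have Hh0 := pos_INR (num_histories (lodgepole n)).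
split; last by apply/Rle_div_l => //; lra.
case: n HD Hh Hh0 => [|m] HD Hh Hh0.
  have : 0 <= hR 0 / dR 0 by apply: Rdiv_le_0_compat.
  by rewrite /=; lra.
have H2 := dR_S_le_hR m; have H3 := dR_S m; have Ha := dR_gt0 m; have Hm := pos_INR m.
rewrite S_INR.
have E : hR m.+1 / dR m.+1 - (1 - 5 / (INR m + 1 + 1)) =
         (hR m.+1 + 5 * dR m - dR m.+1) / dR m.+1 + 5 * (/ (INR m + 1 + 1) - dR m / dR m.+1).
  by field; lra.
have E2 : dR m / dR m.+1 = / (2 * INR m + 3) by rewrite H3; field; lra.
have P1 : 0 <= (hR m.+1 + 5 * dR m - dR m.+1) / dR m.+1 by apply: Rdiv_le_0_compat; lra.
have P2 : / (2 * INR m + 3) <= / (INR m + 1 + 1) by apply: Rinv_le_contravar; lra.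
lra.
Qed.

Lemma hR_dR_lim : is_lim_seq (fun n => hR n / dR n) 1.
Proof.
apply: (is_lim_seq_le_le (fun n => 1 - 5 / (INR n + 1)) _ (fun _ => 1)).
- exact: hR_dR_bounds.
- have := is_lim_seq_minus' _ _ _ _ (is_lim_seq_const 1)
           (is_lim_seq_mult' _ _ _ _ (is_lim_seq_const 5) is_lim_seq_invS).
  by rewrite Rmult_0_r Rminus_0_r.
- exact: is_lim_seq_const.
Qed.

Lemma is_lim_seq_div_pos0 (K : R) (w : nat -> R) : 0 < K -> (forall n, 0 < w n) ->
  is_lim_seq w 0 -> is_lim_seq (fun n => K / w n) p_infty.
Proof.
move=> HK Hw Hl; apply/is_lim_seq_spec => M.
have HM := Rabs_pos M.
have Heps : 0 < K / (Rabs M + 1) by apply: Rdiv_lt_0_compat; lra.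
have [N HN] := proj2 (is_lim_seq_spec w 0) Hl (mkposreal _ Heps).
exists N => n /HN; rewrite /= Rminus_0_r Rabs_pos_eq; last exact/Rlt_le.
move=> Hlt.
have HwK : K / (K / (Rabs M + 1)) = Rabs M + 1 by field; lra.
have : K / (K / (Rabs M + 1)) < K / w n.
  apply: Rmult_lt_compat_l => //; apply: Rinv_lt_contravar => //.
  exact: Rmult_lt_0_compat.
by rewrite HwK; have := Rle_abs M; lra.
Qed.

Lemma dR_superexponential c : 0 < c -> is_lim_seq (fun n => dR n / c ^ (2 * n + 1)) p_infty.
Proof.
move=> Hc.
pose w n := (c ^ 2) ^ n / INR (Factorial.fact n).
have Hc2n n : 0 < (c ^ 2) ^ n by apply/pow_lt/pow_lt.
have Hw n : 0 < w n by apply: Rdiv_lt_0_compat => //; apply: INR_fact_lt_0.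
have Hwl : is_lim_seq w 0 by apply/is_lim_seq_Reals/cv_speed_pow_fact.
apply: (is_lim_seq_le_p_loc (fun n => / c / w n)); last first.
  by apply: is_lim_seq_div_pos0 => //; apply: Rinv_0_lt_compat.
exists 0%nat => n _.
have -> : c ^ (2 * n + 1) = c * (c ^ 2) ^ n by rewrite pow_add pow_mult /=; ring.
have Hf := INR_fact_lt_0 n.
have -> : / c / w n = INR (Factorial.fact n) / (c * (c ^ 2) ^ n).
  by rewrite /w; field; have := Hc2n n; lra.
apply: Rmult_le_compat_r; last by rewrite INR_fact dfact_odfact; apply/leq_INR/fact_le_odfact.
by apply/Rlt_le/Rinv_0_lt_compat/Rmult_lt_0_compat.
Qed.

Lemma hR_superexponential c : 0 < c -> is_lim_seq (fun n => hR n / c ^ (2 * n + 1)) p_infty.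
Proof.
move=> Hc.
apply: (is_lim_seq_ext (fun n => (hR n / dR n) * (dR n / c ^ (2 * n + 1)))).
  move=> n; have := dR_gt0 n; have : 0 < c ^ (2 * n + 1) by apply: pow_lt.
  by move=> ? ?; field; lra.
apply: is_lim_seq_mult hR_dR_lim (dR_superexponential Hc) _.
by apply/is_Rbar_mult_sym/is_Rbar_mult_p_infty_pos => /=; lra.
Qed.

Lemma derive_ge0_ge0 (f df : R -> R) x : 0 <= x -> f 0 = 0 ->
  (forall y, 0 <= y -> is_derive f y (df y)) -> (forall y, 0 <= y -> 0 <= df y) ->
  0 <= f x.
Proof.
move=> Hx f0 Hd Hdf.
have Hmin : Rmin 0 x = 0 by apply: Rmin_left.
have Hmax : Rmax 0 x = x by apply: Rmax_right.
have H1 y : Rmin 0 x < y < Rmax 0 x -> is_derive f y (df y).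
  by rewrite Hmin Hmax => Hy; apply: Hd; lra.
have H2 y : Rmin 0 x <= y <= Rmax 0 x -> continuity_pt f y.
  rewrite Hmin Hmax => Hy; apply/continuity_pt_filterlim/ex_derive_continuous.
  by exists (df y); apply: Hd; lra.
have [c [Hc E]] := MVT_gen f 0 x df H1 H2.
move: Hc; rewrite Hmin Hmax => Hc.
have : 0 <= df c * (x - 0) by apply: Rmult_le_pos; [apply: Hdf | ]; lra.
by rewrite -E f0; lra.
Qed.

Lemma ln_1p_lower x : 0 <= x -> x - x ^ 2 / 2 <= ln (1 + x).
Proof.
move=> Hx.
suff : 0 <= ln (1 + x) - (x - x ^ 2 / 2) by lra.
apply: (@derive_ge0_ge0 (fun y => ln (1 + y) - (y - y ^ 2 / 2))
                        (fun y => y ^ 2 / (1 + y))) => //.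
- by cbv beta; rewrite Rplus_0_r ln_1; field.
- by move=> y Hy; auto_derive; [lra | field; lra].
- move=> y Hy; apply: Rdiv_le_0_compat; [exact: pow2_ge_0 | lra].
Qed.

Lemma ln_1p_upper x : 0 <= x -> ln (1 + x) <= x - x ^ 2 / 2 + x ^ 3 / 3.
Proof.
move=> Hx.
suff : 0 <= x - x ^ 2 / 2 + x ^ 3 / 3 - ln (1 + x) by lra.
apply: (@derive_ge0_ge0 (fun y => y - y ^ 2 / 2 + y ^ 3 / 3 - ln (1 + y))
                        (fun y => y ^ 3 / (1 + y))) => //.
- by cbv beta; rewrite Rplus_0_r ln_1; field.
- by move=> y Hy; auto_derive; [lra | field; lra].
- move=> y Hy; apply: Rdiv_le_0_compat; [apply: pow_le | ]; lra.
Qed.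

Definition stirling_rem (m : nat) : R :=
  ln (INR (Factorial.fact m)) + INR m - (INR m + /2) * ln (INR m).

Lemma stirling_rem_step m : (0 < m)%nat ->
  stirling_rem m - stirling_rem m.+1 = (INR m + /2) * ln (1 + / INR m) - 1.
Proof.
move=> /INR_gt0 Hm.
rewrite /stirling_rem -[Factorial.fact m.+1]/(m.+1 * Factorial.fact m)%coq_nat.
rewrite mult_INR S_INR ln_mult; [|lra|apply: INR_fact_lt_0].
have -> : 1 + / INR m = (INR m + 1) / INR m by field; lra.
by rewrite ln_div; [ring | lra | lra].
Qed.

Lemma stirling_rem_step_bound m : (0 < m)%nat ->
  Rabs (stirling_rem m - stirling_rem m.+1) <= / INR m ^ 2.
Proof.
move=> Hm; have Hm0 := INR_gt0 Hm; have Hm1 : 1 <= INR m by apply: (leq_INR Hm).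
rewrite stirling_rem_step //.
set x := / INR m.
have Hx : 0 < x by apply: Rinv_0_lt_compat.
have Hx1 : x <= 1 by rewrite /x -Rinv_1; apply: Rinv_le_contravar; lra.
have -> : / INR m ^ 2 = x ^ 2 by rewrite /x; field; lra.
have A1 : (INR m + /2) * (x - x ^ 2 / 2) = 1 - x ^ 2 / 4 by rewrite /x; field; lra.
have A2 : (INR m + /2) * (x - x ^ 2 / 2 + x ^ 3 / 3) = 1 + x ^ 2 / 12 + x ^ 3 / 6.
  by rewrite /x; field; lra.
have P : 0 <= INR m + /2 by lra.
have B1 := Rmult_le_compat_l _ _ _ P (ln_1p_lower (Rlt_le _ _ Hx)).
have B2 := Rmult_le_compat_l _ _ _ P (ln_1p_upper (Rlt_le _ _ Hx)).
have D2 : 0 <= x ^ 2 by apply: pow2_ge_0.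
have C : x ^ 3 <= x ^ 2.
  have -> : x ^ 3 = x ^ 2 * x by ring.
  nra.
by apply: Rabs_le; split; lra.
Qed.

Lemma stirling_rem_shift_bound N k : (0 < N)%nat ->
  Rabs (stirling_rem N - stirling_rem (N + k)%nat) <= INR k / INR N ^ 2.
Proof.
move=> HN; have HN0 := INR_gt0 HN.
elim: k => [|k IH]; first by rewrite addn0 Rminus_diag Rabs_R0 /=; lra.
have -> : stirling_rem N - stirling_rem (N + k.+1)%nat =
          (stirling_rem N - stirling_rem (N + k)%nat) +
          (stirling_rem (N + k)%nat - stirling_rem (N + k).+1) by rewrite addnS; ring.
apply: Rle_trans (Rabs_triang _ _) _.
have H2 : Rabs (stirling_rem (N + k)%nat - stirling_rem (N + k).+1) <= / INR N ^ 2.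
  apply: Rle_trans (stirling_rem_step_bound _) _; first by rewrite addn_gt0 HN.
  apply: Rinv_le_contravar; first exact: pow_lt.
  by apply: pow_incr; split; [lra | apply/leq_INR/leq_addr].
rewrite S_INR.
have -> : (INR k + 1) / INR N ^ 2 = INR k / INR N ^ 2 + / INR N ^ 2 by field; lra.
lra.
Qed.

Lemma stirling_rem_double_lim :
  is_lim_seq (fun n => stirling_rem (n.+1 + n.+1)%nat - stirling_rem n.+1) 0.
Proof.
apply: (is_lim_seq_le_le (fun n => - / (INR n + 1)) _ (fun n => / (INR n + 1))).
- move=> n; have := stirling_rem_shift_bound n.+1 (isT : (0 < n.+1)%nat).
  rewrite Rabs_minus_sym S_INR.
  have Hx : 0 < INR n + 1 by have := pos_INR n; lra.
  have -> : (INR n + 1) / (INR n + 1) ^ 2 = / (INR n + 1) by field; lra.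
  by move/Rabs_le_between; lra.
- have := is_lim_seq_mult' _ _ _ _ (is_lim_seq_const (-1)) is_lim_seq_invS.
  by rewrite Rmult_0_r; apply: is_lim_seq_ext => n; ring.
- exact: is_lim_seq_invS.
Qed.

Lemma exp_stirling_rem m : (0 < m)%nat ->
  exp (stirling_rem m) = INR (Factorial.fact m) * exp (INR m) / (INR m ^ m * sqrt (INR m)).
Proof.
move=> /INR_gt0 Hm.
have E : exp ((INR m + /2) * ln (INR m)) = INR m ^ m * sqrt (INR m).
  rewrite -[exp _]/(Rpower (INR m) (INR m + /2)) Rpower_plus Rpower_pow //.
  by rewrite Rpower_sqrt.
rewrite /stirling_rem /Rminus !exp_plus exp_Ropp exp_ln; last exact: INR_fact_lt_0.
by rewrite E /Rdiv; ring.
Qed.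

Lemma exp_INR n : exp (INR n) = exp 1 ^ n.
Proof.
elim: n => [|n IH]; first by rewrite /= exp_0.
by rewrite S_INR exp_plus IH /=; ring.
Qed.

Lemma dR_fact n : dR n * 2 ^ n.+1 * INR (Factorial.fact n.+1) =
                  INR (Factorial.fact (n.+1 + n.+1)).
Proof.
rewrite dfact_odfact !INR_fact -[2 ^ n.+1]/(INR 2 ^ n.+1) -pow_INR -!mult_INR.
have -> : Nat.pow 2 n.+1 = expn 2 n.+1 by elim: n.+1 => // k IH; rewrite expnS /= IH.
by rewrite !multE odfact_fact addnn.
Qed.

Lemma dR_stirling_ratio n :
  dR n / (sqrt 2 * (sqrt (INR (2 * n + 2) / exp 1)) ^ (2 * n + 2)) =
  exp (stirling_rem (n.+1 + n.+1)%nat - stirling_rem n.+1).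
Proof.
set N := n.+1.
have HN : (0 < N)%nat by [].
have Hx := INR_gt0 HN.
have e1 : (2 * n + 2)%nat = (N + N)%nat by rewrite /N; lia.
rewrite e1 /Rminus exp_plus exp_Ropp !exp_stirling_rem // plus_INR -dR_fact -/N.
set x := INR N in Hx *.
have Hs : sqrt ((x + x) / exp 1) ^ (N + N) = ((x + x) / exp 1) ^ N.
  rewrite pow_add -Rpow_mult_distr sqrt_sqrt //.
  by apply/Rlt_le/Rdiv_lt_0_compat; [lra | apply: exp_pos].
rewrite Hs exp_plus pow_add.
have -> : x + x = 2 * x by ring.
rewrite sqrt_mult; [|lra|lra].
rewrite /Rdiv !Rpow_mult_distr pow_inv -exp_INR -/x.
have H2 : 0 < 2 ^ N by apply: pow_lt; lra.
have Hxn : 0 < x ^ N by apply: pow_lt.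
have Hs2 : 0 < sqrt 2 by apply: sqrt_lt_R0; lra.
have Hsx : 0 < sqrt x by apply: sqrt_lt_R0.
have He := exp_pos x; have Hf := INR_fact_lt_0 N; have Hd := dR_gt0 n.
by field; repeat split; lra.
Qed.

Lemma dR_stirling_lim :
  is_lim_seq (fun n => dR n / (sqrt 2 * (sqrt (INR (2 * n + 2) / exp 1)) ^ (2 * n + 2))) 1.
Proof.
apply: (is_lim_seq_ext _ _ _ (fun n => esym (dR_stirling_ratio n))).
have := is_lim_seq_continuous exp _ 0 (derivable_continuous_pt _ _ (derivable_pt_exp 0))
          stirling_rem_double_lim.
by rewrite exp_0.
Qed.

Theorem corollary1 :
  (forall c : R, 0 < c ->
     is_lim_seq (fun n => INR (num_histories (lodgepole n)) / c ^ (2 * n + 1)) p_infty) /\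
  is_lim_seq (fun n => INR (num_histories (lodgepole n)) / INR (dfact (2 * n + 1))) 1 /\
  is_lim_seq (fun n => INR (dfact (2 * n + 1)) /
                       (sqrt 2 * (sqrt (INR (2 * n + 2) / exp 1)) ^ (2 * n + 2))) 1.
Proof.
split; first exact: hR_superexponential.
by split; [exact: hR_dR_lim | exact: dR_stirling_lim].
Qed.
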